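(* Let $\Gamma$ be a group, let $\mathcal{C},\mathcal{C}'$ be monoidal categories, and let $G:\mathcal{C}\to\mathcal{C}'$ and $H:\mathcal{C}'\to\mathcal{C}$ be monoidal equivalences together with isomorphisms of monoidal functors $\alpha: G\circ H\cong \mathrm{id}_{\mathcal{C}'}$ and $\beta: H\circ G\cong \mathrm{id}_{\mathcal{C}}$. Let $(\theta,F)$ be a factor set on $\Gamma$ with coefficients in $\mathcal{C}$, and let $\mathcal{D}=\Delta(\theta,F)$ be the associated crossed product $\Gamma$-extension of $\mathcal{C}$. Then the quadruple $(G,H,\alpha,\beta)$ induces (i) a factor set $(\theta',F')$ on $\Gamma$ with coefficients in $\mathcal{C}'$, and (ii) a $\Gamma$-equivalence $\Delta(\theta,F)\to \Delta(\theta',F')$.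
   Context: A monoidal functor is written $F=(F,\widetilde F,\widehat F)$ with natural isomorphisms $\widetilde F_{X,Y}:F(X\otimes Y)\to F(X)\otimes F(Y)$ and $\widehat F:F(I)\to I$ satisfying the usual coherence conditions. A factor set on a group $\Gamma$ with coefficients in a monoidal category $\mathcal{C}$ is a pair $(\theta,F)$ consisting of a family of monoidal autoequivalences $F^\sigma=(F^\sigma,\widetilde{F^\sigma},\widehat{F^\sigma}):\mathcal{C}\to\mathcal{C}$ ($\sigma\in\Gamma$) and a family of isomorphisms of monoidal functors $\theta^{\sigma,\tau}:F^\sigma F^\tau\to F^{\sigma\tau}$ ($\sigma,\tau\in\Gamma$) such that: (i) $F^1=\mathrm{id}_{\mathcal{C}}$; (ii) $\theta^{1,\sigma}=\mathrm{id}_{F^\sigma}=\theta^{\sigma,1}$ for all $\sigma$; (iii) $\theta^{\sigma\tau,\gamma}\circ(\theta^{\sigma,\tau}F^\gamma)=\theta^{\sigma,\tau\gamma}\circ(F^\sigma\theta^{\tau,\gamma})$ as transformations $F^\sigma F^\tau F^\gamma\to F^{\sigma\tau\gamma}$, for all $\sigma,\tau,\gamma\in\Gamma$. The crossed product $\Delta(\theta,F)$ is the category whose objects are those of $\mathcal{C}$, whose morphisms $A\to B$ are pairs $(u,\sigma)$ with $\sigma\in\Gamma$ and $u:F^\sigma(A)\to B$ a morphism of $\mathcal{C}$, with composition of $A\xrightarrow{(u,\sigma)}B\xrightarrow{(v,\tau)}C$ given by $(v\circ F^\tau(u)\circ(\theta^{\tau,\sigma}_A)^{-1},\tau\sigma)$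 (identities $(\mathrm{id}_A,1)$); it carries the stable $\Gamma$-grading $g(u,\sigma)=\sigma$ and the isomorphism $j:\mathcal{C}\to\mathrm{Ker}\,\Delta(\theta,F)$, $j(u)=(u,1)$, onto the subcategory of morphisms of grade $1$. A $\Gamma$-equivalence between $\Gamma$-graded categories is a functor compatible with the gradings (preserving the grade of every morphism) which is an equivalence of categories. *)

(* Equality of morphisms is Leibniz equality. *)

Set Implicit Arguments.
Unset Strict Implicit.

Record Group := {
  gcar :> Type;
  gmul : gcar -> gcar -> gcar;
  gone : gcar;
  ginv : gcar -> gcar;
  gmulA : forall x y z, gmul x (gmul y z) = gmul (gmul x y) z;
  gmul1l : forall x, gmul gone x = x;
  gmul1r : forall x, gmul x gone = x;
  gmulVl : forall x, gmul (ginv x) x = gone;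
  gmulVr : forall x, gmul x (ginv x) = gone }.
Arguments gmul {g} _ _.
Arguments gone {g}.
Arguments ginv {g} _.

Record CatData := {
  ob :> Type;
  hom : ob -> ob -> Type;
  idm : forall A, hom A A;
  comp : forall A B C, hom B C -> hom A B -> hom A C }.
Arguments hom {c} _ _.
Arguments idm {c} _.
Arguments comp {c A B C} _ _.
Notation "g ∘ f" := (comp g f) (at level 40, left associativity).

Definition is_category (C : CatData) : Prop :=
  (forall (A B : C) (f : hom A B), idm B ∘ f = f) /\
  (forall (A B : C) (f : hom A B), f ∘ idm A = f) /\
  (forall (A B D E : C) (f : hom A B) (g : hom B D) (h : hom D E),
      h ∘ (g ∘ f) = (h ∘ g) ∘ f).

Definition is_iso (C : CatData) (A B : C) (f : hom A B) : Prop :=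
  exists g : hom B A, g ∘ f = idm A /\ f ∘ g = idm B.

Definition hom_cast (C : CatData) (A A' B B' : C) (e1 : A = A') (e2 : B = B')
  (f : hom A B) : hom A' B' :=
  match e1 in _ = A1 return hom A1 B' with
  | eq_refl => match e2 in _ = B1 return hom A B1 with eq_refl => f end
  end.

Record FunctorData (C D : CatData) := {
  Fo : C -> D;
  Fm : forall A B : C, hom A B -> hom (Fo A) (Fo B) }.
Arguments Fm {C D} _ {A B} _.

Definition is_functor (C D : CatData) (F : FunctorData C D) : Prop :=
  (forall A : C, Fm F (idm A) = idm (Fo F A)) /\
  (forall (A B E : C) (f : hom A B) (g : hom B E), Fm F (g ∘ f) = Fm F g ∘ Fm F f).

Definition fd_comp (C D E : CatData) (G : FunctorData D E) (F : FunctorData C D)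
  : FunctorData C E :=
  {| Fo := fun X => Fo G (Fo F X); Fm := fun A B f => Fm G (Fm F f) |}.

Definition fd_id (C : CatData) : FunctorData C C :=
  {| Fo := fun X => X; Fm := fun A B f => f |}.

Definition is_nat_iso (C D : CatData) (F G : FunctorData C D)
  (eta : forall X : C, hom (Fo F X) (Fo G X)) : Prop :=
  (forall (X Y : C) (f : hom X Y), Fm G f ∘ eta X = eta Y ∘ Fm F f) /\
  (forall X : C, is_iso (eta X)).

Arguments is_nat_iso {C D} F G eta.

Definition is_equivalence (C D : CatData) (F : FunctorData C D) : Prop :=
  is_functor F /\
  exists K : FunctorData D C, is_functor K /\
    (exists eta, is_nat_iso (fd_comp K F) (fd_id C) eta) /\
    (exists eps, is_nat_iso (fd_comp F K) (fd_id D) eps).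

Record MonCatData := {
  mc :> CatData;
  tens : mc -> mc -> mc;
  tensm : forall A A' B B' : mc, hom A A' -> hom B B' -> hom (tens A B) (tens A' B');
  munit : mc;
  massoc : forall A B C : mc, hom (tens (tens A B) C) (tens A (tens B C));
  mlunit : forall A : mc, hom (tens munit A) A;
  mrunit : forall A : mc, hom (tens A munit) A }.
Arguments tens {m} _ _.
Arguments tensm {m A A' B B'} _ _.
Arguments munit {m}.
Arguments massoc {m} _ _ _.
Arguments mlunit {m} _.
Arguments mrunit {m} _.

Definition is_monoidal (M : MonCatData) : Prop :=
  is_category M /\
  (forall A B : M, tensm (idm A) (idm B) = idm (tens A B)) /\
  (forall (A A' A'' B B' B'' : M) (f : hom A A') (f' : hom A' A'')
          (g : hom B B') (g' : hom B' B''),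
      tensm (f' ∘ f) (g' ∘ g) = tensm f' g' ∘ tensm f g) /\
  (forall A B C : M, is_iso (massoc A B C)) /\
  (forall A : M, is_iso (mlunit A)) /\
  (forall A : M, is_iso (mrunit A)) /\
  (forall (A A' B B' C C' : M) (f : hom A A') (g : hom B B') (h : hom C C'),
      massoc A' B' C' ∘ tensm (tensm f g) h = tensm f (tensm g h) ∘ massoc A B C) /\
  (forall (A A' : M) (f : hom A A'),
      mlunit A' ∘ tensm (idm munit) f = f ∘ mlunit A) /\
  (forall (A A' : M) (f : hom A A'),
      mrunit A' ∘ tensm f (idm munit) = f ∘ mrunit A) /\
  (forall A B C D : M,
      tensm (idm A) (massoc B C D) ∘ massoc A (tens B C) D ∘ tensm (massoc A B C) (idm D)
      = massoc A B (tens C D) ∘ massoc (tens A B) C D) /\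
  (forall A B : M,
      tensm (idm A) (mlunit B) ∘ massoc A munit B = tensm (mrunit A) (idm B)).

Record MonCat := { mcd :> MonCatData; mc_ax : is_monoidal mcd }.

Record MFData (C D : MonCatData) := {
  fobj : C -> D;
  fhom : forall A B : C, hom A B -> hom (fobj A) (fobj B);
  ftil : forall X Y : C, hom (fobj (tens X Y)) (tens (fobj X) (fobj Y));
  fhat : hom (fobj munit) munit }.
Arguments fobj {C D} _ _.
Arguments fhom {C D} _ {A B} _.
Arguments ftil {C D} _ _ _.
Arguments fhat {C D} _.

Definition is_monoidal_functor (C D : MonCatData) (F : MFData C D) : Prop :=
  (forall A : C, fhom F (idm A) = idm (fobj F A)) /\
  (forall (A B E : C) (f : hom A B) (g : hom B E), fhom F (g ∘ f) = fhom F g ∘ fhom F f) /\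
  (forall X Y : C, is_iso (ftil F X Y)) /\
  is_iso (fhat F) /\
  (forall (X X' Y Y' : C) (f : hom X X') (g : hom Y Y'),
      tensm (fhom F f) (fhom F g) ∘ ftil F X Y = ftil F X' Y' ∘ fhom F (tensm f g)) /\
  (forall X Y Z : C,
      massoc (fobj F X) (fobj F Y) (fobj F Z) ∘ tensm (ftil F X Y) (idm (fobj F Z))
        ∘ ftil F (tens X Y) Z
      = tensm (idm (fobj F X)) (ftil F Y Z) ∘ ftil F X (tens Y Z) ∘ fhom F (massoc X Y Z)) /\
  (forall X : C,
      mlunit (fobj F X) ∘ tensm (fhat F) (idm (fobj F X)) ∘ ftil F munit X
      = fhom F (mlunit X)) /\
  (forall X : C,
      mrunit (fobj F X) ∘ tensm (idm (fobj F X)) (fhat F) ∘ ftil F X munit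
      = fhom F (mrunit X)).

Record MonFunctor (C D : MonCatData) := {
  mfd :> MFData C D; mf_ax : is_monoidal_functor mfd }.

Definition mf_comp (C D E : MonCatData) (G : MFData D E) (F : MFData C D) : MFData C E :=
  {| fobj := fun X => fobj G (fobj F X);
     fhom := fun A B f => fhom G (fhom F f);
     ftil := fun X Y => ftil G (fobj F X) (fobj F Y) ∘ fhom G (ftil F X Y);
     fhat := fhat G ∘ fhom G (fhat F) |}.

Definition mf_id (C : MonCatData) : MFData C C :=
  {| fobj := fun X => X; fhom := fun A B f => f;
     ftil := fun X Y => idm (tens X Y); fhat := idm munit |}.

Definition is_mon_nat (C D : MonCatData) (F G : MFData C D)
  (eta : forall X : C, hom (fobj F X) (fobj G X)) : Prop :=
  (forall (X Y : C) (f : hom X Y), fhom G f ∘ eta X = eta Y ∘ fhom F f) /\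
  (forall X Y : C, ftil G X Y ∘ eta (tens X Y) = tensm (eta X) (eta Y) ∘ ftil F X Y) /\
  fhat G ∘ eta munit = fhat F.

Arguments is_mon_nat {C D} F G eta.

Definition is_mon_iso (C D : MonCatData) (F G : MFData C D)
  (eta : forall X : C, hom (fobj F X) (fobj G X)) : Prop :=
  is_mon_nat F G eta /\ forall X : C, is_iso (eta X).

Arguments is_mon_iso {C D} F G eta.

Definition is_monoidal_equivalence (C D : MonCatData) (F : MFData C D) : Prop :=
  is_monoidal_functor F /\
  exists K : MFData D C, is_monoidal_functor K /\
    (exists a, is_mon_iso (mf_comp F K) (mf_id D) a) /\
    (exists b, is_mon_iso (mf_comp K F) (mf_id C) b).

Definition fobj_eq (C D : MonCatData) (F G : MFData C D) (e : F = G) (X : C)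
  : fobj F X = fobj G X := f_equal (fun K => fobj K X) e.

(* Factor sets.  theta^{s,t} : F^s F^t -> F^{st}; we also carry its    *)
(* (unique) inverse, needed to define composition in the crossed       *)
(* product.  Equalities that hold only up to 1*s = s, s*1 = s,         *)
(* s(tg) = (st)g, F^1 = id are stated through the transport hom_cast.  *)
Record is_factor_set (Γ : Group) (C : MonCatData) (F : Γ -> MonFunctor C C)
  (θ : forall (s t : Γ) (X : C), hom (fobj (F s) (fobj (F t) X)) (fobj (F (gmul s t)) X))
  (θi : forall (s t : Γ) (X : C), hom (fobj (F (gmul s t)) X) (fobj (F s) (fobj (F t) X)))
  : Prop := {
  fs_autoeq : forall s, is_monoidal_equivalence (F s);
  fs_iso : forall s t, is_mon_iso (mf_comp (F s) (F t)) (F (gmul s t)) (θ s t);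
  fs_inv : forall s t X, θi s t X ∘ θ s t X = idm _ /\ θ s t X ∘ θi s t X = idm _;
  fs_one : mfd (F gone) = mf_id C;
  fs_unitl : forall s X,
    hom_cast (fobj_eq fs_one (fobj (F s) X))
             (f_equal (fun r => fobj (F r) X) (gmul1l s)) (θ gone s X)
    = idm (fobj (F s) X);
  fs_unitr : forall s X,
    hom_cast (f_equal (fobj (F s)) (fobj_eq fs_one X))
             (f_equal (fun r => fobj (F r) X) (gmul1r s)) (θ s gone X)
    = idm (fobj (F s) X);
  fs_cocycle : forall s t g X,
    θ (gmul s t) g X ∘ θ s t (fobj (F g) X)
    = hom_cast eq_refl (f_equal (fun r => fobj (F r) X) (gmulA s t g))
        (θ s (gmul t g) X ∘ fhom (F s) (θ t g X)) }.

Arguments is_factor_set {Γ C} F θ θi.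

Record FactorSet (Γ : Group) (C : MonCatData) := {
  fsF : Γ -> MonFunctor C C;
  fsθ : forall (s t : Γ) (X : C), hom (fobj (fsF s) (fobj (fsF t) X)) (fobj (fsF (gmul s t)) X);
  fsθi : forall (s t : Γ) (X : C), hom (fobj (fsF (gmul s t)) X) (fobj (fsF s) (fobj (fsF t) X));
  fs_ax : is_factor_set fsF fsθ fsθi }.

(* Crossed product Delta(theta, F): objects of C, morphisms A -> B are *)
(* pairs (s, u) with u : F^s A -> B; (v,t)∘(u,s) =                     *)
(* (v ∘ F^t(u) ∘ (theta^{t,s}_A)^{-1}, ts); identity (id_A, 1).        *)
Definition Delta (Γ : Group) (C : MonCatData) (fs : FactorSet Γ C) : CatData :=
  {| ob := ob C;
     hom := fun A B => { s : Γ & hom (fobj (fsF fs s) A) B };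
     idm := fun A => existT (fun s : Γ => hom (fobj (fsF fs s) A) A) gone
              (hom_cast (eq_sym (fobj_eq (fs_one (fs_ax fs)) A)) eq_refl (idm A));
     comp := fun A B D (v : { s : Γ & hom (fobj (fsF fs s) B) D })
                       (u : { s : Γ & hom (fobj (fsF fs s) A) B }) =>
       existT (fun s : Γ => hom (fobj (fsF fs s) A) D) (gmul (projT1 v) (projT1 u))
         (projT2 v ∘ fhom (fsF fs (projT1 v)) (projT2 u) ∘ fsθi fs (projT1 v) (projT1 u) A) |}.

Definition grade (Γ : Group) (C : MonCatData) (fs : FactorSet Γ C) (A B : Delta fs)
  (f : hom A B) : Γ := projT1 f.

Definition is_Gamma_equivalence (Γ : Group) (C C' : MonCatData)
  (fs : FactorSet Γ C) (fs' : FactorSet Γ C') (Φ : FunctorData (Delta fs) (Delta fs')) : Prop :=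
  (forall (A B : Delta fs) (f : hom A B), grade (Fm Φ f) = grade f) /\
  is_equivalence Φ.

From Stdlib Require Import ProofIrrelevance ClassicalEpsilon FunctionalExtensionality.

Set Implicit Arguments.
Unset Strict Implicit.

(* The factor set is transported by conjugation: F'^σ := G F^σ H and, up to the identifications
   η : F'^σ ≅ G F^σ H, θ'^{σ,τ} := G θ^{σ,τ} H ∘ G F^σ β F^τ H.  Its unit and cocycle axioms
   reduce to those of θ once α is replaced by α' := α ∘ G β H ∘ (α_{G H})^-1, for which the
   triangle identities α'_G = G β and H α' = β_H hold.  On crossed products, Φ is G on objects
   and sends (u, σ) to (G u ∘ G F^σ β, σ); its quasi-inverse Ψ is H on objects and sends (v, σ)
   to (H v ∘ (β_{F^σ H})^-1, σ), and the two natural isomorphisms are β and α' placed in grade 1. *)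

Section CategoryFacts.
Variable M : MonCat.

Lemma id_comp (A B : M) (f : hom A B) : idm B ∘ f = f.
Proof. destruct (mc_ax M) as [[h _] _]. apply h. Qed.
Lemma comp_id (A B : M) (f : hom A B) : f ∘ idm A = f.
Proof. destruct (mc_ax M) as [[_ [h _]] _]. apply h. Qed.
Lemma compA (A B D E : M) (f : hom A B) (g : hom B D) (h : hom D E) :
  h ∘ (g ∘ f) = h ∘ g ∘ f.
Proof. destruct (mc_ax M) as [[_ [_ h']] _]. apply h'. Qed.
Lemma tens_id (A B : M) : tensm (idm A) (idm B) = idm (tens A B).
Proof. destruct (mc_ax M) as [_ [h _]]. apply h. Qed.
Lemma tens_comp (A A' A'' B B' B'' : M) (f : hom A A') (f' : hom A' A'')
  (g : hom B B') (g' : hom B' B'') :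
  tensm (f' ∘ f) (g' ∘ g) = tensm f' g' ∘ tensm f g.
Proof. destruct (mc_ax M) as [_ [_ [h _]]]. apply h. Qed.

Lemma comp_congr_l (A B D : M) (f : hom A B) (g g' : hom B D) : g = g' -> g ∘ f = g' ∘ f.
Proof. intros ->. reflexivity. Qed.
Lemma comp_congr_r (A B D : M) (h : hom B D) (g g' : hom A B) : g = g' -> h ∘ g = h ∘ g'.
Proof. intros ->. reflexivity. Qed.

(* Rewriting with [postcomp_eq e] replaces [p ∘ q] by [r] inside a left-nested composite. *)
Lemma postcomp_eq (B D E : M) (p : hom D E) (q : hom B D) (r : hom B E) :
  p ∘ q = r -> forall W (x : hom E W), x ∘ p ∘ q = x ∘ r.
Proof. intros h W x. rewrite <- compA, h. reflexivity. Qed.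

Lemma is_iso_id (A : M) : is_iso (idm A).
Proof. exists (idm A). split; apply id_comp. Qed.
Lemma is_iso_comp (A B D : M) (f : hom A B) (g : hom B D) :
  is_iso f -> is_iso g -> is_iso (g ∘ f).
Proof.
  intros [f' [f1 f2]] [g' [g1 g2]]. exists (f' ∘ g'). split.
  - rewrite !compA, <- (compA g g'), g1, comp_id, f1. reflexivity.
  - rewrite !compA, <- (compA f' f), f2, comp_id, g2. reflexivity.
Qed.
Lemma is_iso_tensm (A B X Y : M) (f : hom A B) (g : hom X Y) :
  is_iso f -> is_iso g -> is_iso (tensm f g).
Proof.
  intros [f' [f1 f2]] [g' [g1 g2]]. exists (tensm f' g').
  split; rewrite <- tens_comp; [rewrite f1, g1 | rewrite f2, g2]; apply tens_id.
Qed.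
Lemma iso_cancel_l (A B D : M) (f : hom A B) (g g' : hom D A) :
  is_iso f -> f ∘ g = f ∘ g' -> g = g'.
Proof.
  intros [f' [f1 f2]] e.
  rewrite <- (id_comp g), <- (id_comp g'), <- f1, <- !compA, e. reflexivity.
Qed.
Lemma iso_cancel_r (A B D : M) (f : hom A B) (g g' : hom B D) :
  is_iso f -> g ∘ f = g' ∘ f -> g = g'.
Proof.
  intros [f' [f1 f2]] e.
  rewrite <- (comp_id g), <- (comp_id g'), <- f2, !compA, e. reflexivity.
Qed.

End CategoryFacts.

Definition iinv (C : CatData) (A B : C) (f : hom A B) (h : is_iso f) : hom B A :=
  proj1_sig (constructive_indefinite_description _ h).

Lemma iinv_l (C : CatData) (A B : C) (f : hom A B) (h : is_iso f) : iinv h ∘ f = idm A.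
Proof.
  unfold iinv. destruct (constructive_indefinite_description _ h) as [g [h1 h2]]. exact h1.
Qed.
Lemma iinv_r (C : CatData) (A B : C) (f : hom A B) (h : is_iso f) : f ∘ iinv h = idm B.
Proof.
  unfold iinv. destruct (constructive_indefinite_description _ h) as [g [h1 h2]]. exact h2.
Qed.
Lemma is_iso_iinv (C : CatData) (A B : C) (f : hom A B) (h : is_iso f) : is_iso (iinv h).
Proof. exists f. split; [apply iinv_r | apply iinv_l]. Qed.

Section MonoidalFunctorFacts.
Variables C D : MonCatData.
Variables (K : MFData C D) (hK : is_monoidal_functor K).

Lemma fhom_id (A : C) : fhom K (idm A) = idm (fobj K A).
Proof. apply hK. Qed.
Lemma fhom_comp (A B E : C) (f : hom A B) (g : hom B E) :
  fhom K (g ∘ f) = fhom K g ∘ fhom K f.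
Proof. apply hK. Qed.
Lemma ftil_natural (X X' Y Y' : C) (f : hom X X') (g : hom Y Y') :
  tensm (fhom K f) (fhom K g) ∘ ftil K X Y = ftil K X' Y' ∘ fhom K (tensm f g).
Proof. apply hK. Qed.

End MonoidalFunctorFacts.

Lemma is_iso_fhom (C D : MonCat) (K : MFData C D) (hK : is_monoidal_functor K) (A B : C)
  (f : hom A B) : is_iso f -> is_iso (fhom K f).
Proof.
  intros [g [g1 g2]]. exists (fhom K g). split; rewrite <- (fhom_comp hK).
  - rewrite g1. apply (fhom_id hK).
  - rewrite g2. apply (fhom_id hK).
Qed.

Lemma mf_id_monoidal (C : MonCat) : is_monoidal_functor (mf_id C).
Proof.
  repeat split; simpl; intros.
  all: try apply is_iso_id.
  all: rewrite ?tens_id, ?id_comp, ?comp_id; reflexivity.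
Qed.
Lemma mf_comp_monoidal (C D E : MonCat) (G : MFData D E) (F : MFData C D) :
  is_monoidal_functor G -> is_monoidal_functor F -> is_monoidal_functor (mf_comp G F).
Proof.
  intros hG hF. pose proof hG as hG'. pose proof hF as hF'.
  destruct hG' as [G1 [G2 [G3 [G4 [G5 [G6 [G7 G8]]]]]]].
  destruct hF' as [F1 [F2 [F3 [F4 [F5 [F6 [F7 F8]]]]]]].
  split; [|split; [|split; [|split; [|split; [|split; [|split]]]]]]; simpl.
  - intros A. rewrite F1, G1. reflexivity.
  - intros. rewrite F2, G2. reflexivity.
  - intros. apply is_iso_comp; [apply is_iso_fhom; auto | auto].
  - apply is_iso_comp; [apply is_iso_fhom; auto | auto].
  - intros. rewrite compA, G5, <- compA, <- G2, F5, G2, compA. reflexivity.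
  - intros X Y Z.
    assert (H1 : tensm (fhom G (ftil F X Y)) (idm (fobj G (fobj F Z)))
                 ∘ ftil G (fobj F (tens X Y)) (fobj F Z)
               = ftil G (tens (fobj F X) (fobj F Y)) (fobj F Z)
                 ∘ fhom G (tensm (ftil F X Y) (idm (fobj F Z)))).
    { rewrite <- G1. apply G5. }
    assert (H2 : tensm (idm (fobj G (fobj F X))) (fhom G (ftil F Y Z))
                 ∘ ftil G (fobj F X) (fobj F (tens Y Z))
               = ftil G (fobj F X) (tens (fobj F Y) (fobj F Z))
                 ∘ fhom G (tensm (idm (fobj F X)) (ftil F Y Z))).
    { rewrite <- G1. apply G5. }
    rewrite <- (id_comp (idm (fobj G (fobj F Z)))), <- (id_comp (idm (fobj G (fobj F X)))).
    rewrite !tens_comp, !compA, (postcomp_eq H1), (postcomp_eq H2), !compA, G6.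
    rewrite <- !compA, <- !G2, !compA, F6. reflexivity.
  - intros X.
    assert (H3 : tensm (fhom G (fhat F)) (idm (fobj G (fobj F X)))
      ∘ ftil G (fobj F munit) (fobj F X)
               = ftil G munit (fobj F X) ∘ fhom G (tensm (fhat F) (idm (fobj F X)))).
    { rewrite <- G1. apply G5. }
    rewrite <- (id_comp (idm (fobj G (fobj F X)))), tens_comp, !compA, (postcomp_eq H3), !compA, G7.
    rewrite <- !compA, <- !G2, !compA, F7. reflexivity.
  - intros X.
    assert (H3 : tensm (idm (fobj G (fobj F X))) (fhom G (fhat F))
      ∘ ftil G (fobj F X) (fobj F munit)
               = ftil G (fobj F X) munit ∘ fhom G (tensm (idm (fobj F X)) (fhat F))).
    { rewrite <- G1. apply G5. }
    rewrite <- (id_comp (idm (fobj G (fobj F X)))), tens_comp, !compA, (postcomp_eq H3), !compA, G8.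
    rewrite <- !compA, <- !G2, !compA, F8. reflexivity.
Qed.

(* [f ≅ g]: [f] and [g] agree after transport along equalities of their sources and targets.
   The unit and cocycle axioms of a factor set hold only in this sense. *)
Definition heq (C : CatData) (A B A' B' : C) (f : hom A B) (g : hom A' B') : Prop :=
  exists (e1 : A = A') (e2 : B = B'), hom_cast e1 e2 f = g.
Notation "f ≅ g" := (heq f g) (at level 70).
Lemma hom_cast_refl (C : CatData) (A B : C) (e1 : A = A) (e2 : B = B) (f : hom A B) :
  hom_cast e1 e2 f = f.
Proof. rewrite (proof_irrelevance _ e1 eq_refl), (proof_irrelevance _ e2 eq_refl). reflexivity. Qed.

Lemma heq_refl (C : CatData) (A B : C) (f : hom A B) : f ≅ f.
Proof. exists eq_refl, eq_refl. reflexivity. Qed.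
Lemma heq_eq (C : CatData) (A B : C) (f g : hom A B) : f ≅ g -> f = g.
Proof. intros [e1 [e2 h]]. rewrite hom_cast_refl in h. exact h. Qed.
Lemma eq_heq (C : CatData) (A B : C) (f g : hom A B) : f = g -> f ≅ g.
Proof. intros ->. apply heq_refl. Qed.
Lemma heq_sym (C : CatData) (A B A' B' : C) (f : hom A B) (g : hom A' B') : f ≅ g -> g ≅ f.
Proof. intros [e1 [e2 h]]. subst A' B'. rewrite hom_cast_refl in h. subst. apply heq_refl. Qed.
Lemma heq_trans (C : CatData) (A B A' B' A'' B'' : C) (f : hom A B) (g : hom A' B')
  (k : hom A'' B'') : f ≅ g -> g ≅ k -> f ≅ k.
Proof.
  intros [e1 [e2 h]] [e3 [e4 h']]. subst A' B' A'' B''.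
  rewrite hom_cast_refl in h, h'. subst. apply heq_refl.
Qed.
Lemma heq_cast (C : CatData) (A B A' B' : C) (e1 : A = A') (e2 : B = B') (f : hom A B) :
  hom_cast e1 e2 f ≅ f.
Proof. apply heq_sym. exists e1, e2. reflexivity. Qed.
Lemma cast_heq (C : CatData) (A B A' B' : C) (e1 : A = A') (e2 : B = B') (f : hom A B)
  (g : hom A' B') : f ≅ g -> hom_cast e1 e2 f = g.
Proof. intros h. apply heq_eq. eapply heq_trans; [apply heq_cast | exact h]. Qed.
Lemma heq_comp (C : CatData) (A B D A' B' D' : C) (f : hom A B) (g : hom B D)
  (f' : hom A' B') (g' : hom B' D') : f ≅ f' -> g ≅ g' -> g ∘ f ≅ g' ∘ f'.
Proof.
  intros [e1 [e2 h]] [e3 [e4 h']]. subst A' B' D'.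
  rewrite hom_cast_refl in h, h'. subst. apply heq_refl.
Qed.
Lemma heq_fhom (C D : MonCatData) (K : MFData C D) (A B A' B' : C) (f : hom A B)
  (f' : hom A' B') : f ≅ f' -> fhom K f ≅ fhom K f'.
Proof. intros [e1 [e2 h]]. subst A' B'. rewrite hom_cast_refl in h. subst. apply heq_refl. Qed.
Lemma heq_fam (C : CatData) (T : Type) (P Q : T -> C) (a : forall t, hom (P t) (Q t))
  (t t' : T) : t = t' -> a t ≅ a t'.
Proof. intros ->. apply heq_refl. Qed.
Lemma existT_heq (C : CatData) (T : Type) (P : T -> C) (B : C) (r s : T)
  (x : hom (P r) B) (y : hom (P s) B) :
  r = s -> x ≅ y -> existT (fun t => hom (P t) B) r x = existT (fun t => hom (P t) B) s y.
Proof. intros <- h. rewrite (heq_eq h). reflexivity. Qed.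

Lemma fhom_id_heq (C : MonCatData) (K : MFData C C) (e : K = mf_id C) (A B : C) (f : hom A B) :
  fhom K f ≅ f.
Proof. subst K. apply heq_refl. Qed.

Lemma heq_inv (M : MonCat) (A B A' B' : M) (f : hom A B) (g : hom B A) (f' : hom A' B')
  (g' : hom B' A') : f ≅ f' -> g ∘ f = idm A -> f' ∘ g' = idm B' -> g ≅ g'.
Proof.
  intros [e1 [e2 h]] h1 h2. subst A' B'. rewrite hom_cast_refl in h. subst f'.
  apply eq_heq. rewrite <- (comp_id g), <- h2, compA, h1, id_comp. reflexivity.
Qed.

Lemma mon_nat_vcomp (C : MonCatData) (D : MonCat) (F G K : MFData C D) a b :
  is_mon_nat F G a -> is_mon_nat G K b -> is_mon_nat F K (fun X => b X ∘ a X).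
Proof.
  intros [a1 [a2 a3]] [b1 [b2 b3]]. split; [|split].
  - intros X Y f. rewrite compA, b1, <- compA, a1, compA. reflexivity.
  - intros X Y. rewrite compA, b2, <- compA, a2, compA, <- tens_comp. reflexivity.
  - rewrite compA, b3, a3. reflexivity.
Qed.
Lemma mon_iso_vcomp (C : MonCatData) (D : MonCat) (F G K : MFData C D) a b :
  is_mon_iso F G a -> is_mon_iso G K b -> is_mon_iso F K (fun X => b X ∘ a X).
Proof.
  intros [ha ia] [hb ib]. split; [eapply mon_nat_vcomp; eauto|].
  intros X. apply is_iso_comp; auto.
Qed.

Lemma mon_iso_id (C : MonCatData) (D : MonCat) (F : MFData C D) :
  is_mon_iso F F (fun X => idm _).
Proof.
  split; [split; [|split]|].
  - intros. rewrite id_comp, comp_id. reflexivity.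
  - intros. rewrite tens_id, id_comp, comp_id. reflexivity.
  - apply comp_id.
  - intros. apply is_iso_id.
Qed.

Lemma mon_nat_inv (C : MonCatData) (D : MonCat) (F G : MFData C D) a
  (ha : forall X, is_iso (a X)) :
  is_mon_nat F G a -> is_mon_nat G F (fun X => iinv (ha X)).
Proof.
  intros [a1 [a2 a3]]. split; [|split].
  - intros X Y f. apply (iso_cancel_l (ha Y)).
    rewrite !compA, iinv_r, id_comp, <- a1, <- compA, iinv_r, comp_id. reflexivity.
  - intros X Y. apply (iso_cancel_l (is_iso_tensm (ha X) (ha Y))).
    rewrite !compA, <- tens_comp, !iinv_r, tens_id, id_comp, <- a2, <- compA, iinv_r, comp_id.
    reflexivity.
  - rewrite <- a3, <- compA, iinv_r, comp_id. reflexivity.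
Qed.
Lemma mon_iso_inv (C : MonCatData) (D : MonCat) (F G : MFData C D) a
  (ha : forall X, is_iso (a X)) :
  is_mon_nat F G a -> is_mon_iso G F (fun X => iinv (ha X)).
Proof. intros h. split; [apply mon_nat_inv, h | intros; apply is_iso_iinv]. Qed.

Lemma mon_nat_whiskR (B C : MonCatData) (D : MonCat) (F G : MFData C D) (K : MFData B C) a :
  is_mon_nat F G a -> is_mon_nat (mf_comp F K) (mf_comp G K) (fun X => a (fobj K X)).
Proof.
  intros [a1 [a2 a3]]. split; [|split]; simpl.
  - intros X Y f. apply a1.
  - intros X Y. rewrite <- compA, a1, compA, a2, compA. reflexivity.
  - rewrite <- compA, a1, compA, a3. reflexivity.
Qed.
Lemma mon_iso_whiskR (B C : MonCatData) (D : MonCat) (F G : MFData C D) (K : MFData B C) a :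
  is_mon_iso F G a -> is_mon_iso (mf_comp F K) (mf_comp G K) (fun X => a (fobj K X)).
Proof. intros [h i]. split; [apply mon_nat_whiskR, h | intros; apply i]. Qed.

Lemma mon_nat_whiskL (B : MonCatData) (C D : MonCat) (F G : MFData B C) (L : MFData C D) a :
  is_monoidal_functor L ->
  is_mon_nat F G a -> is_mon_nat (mf_comp L F) (mf_comp L G) (fun X => fhom L (a X)).
Proof.
  intros hL [a1 [a2 a3]]. split; [|split]; simpl.
  - intros X Y f. rewrite <- !(fhom_comp hL), a1. reflexivity.
  - intros X Y. rewrite <- compA, <- (fhom_comp hL), a2, (fhom_comp hL), compA.
    rewrite <- (ftil_natural hL), compA. reflexivity.
  - rewrite <- compA, <- (fhom_comp hL), a3. reflexivity.
Qed.
Lemma mon_iso_whiskL (B : MonCatData) (C D : MonCat) (F G : MFData B C) (L : MFData C D) a :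
  is_monoidal_functor L ->
  is_mon_iso F G a -> is_mon_iso (mf_comp L F) (mf_comp L G) (fun X => fhom L (a X)).
Proof. intros hL [h i]. split; [apply mon_nat_whiskL; auto | intros; apply is_iso_fhom; auto]. Qed.

Lemma mon_iso_extL (C : MonCatData) (D : MonCat) (F G : MFData C D) a ft fh :
  (forall X Y, ft X Y = ftil F X Y) -> fh = fhat F -> is_mon_iso F G a ->
  is_mon_iso (@Build_MFData C D (fobj F) (@fhom _ _ F) ft fh) G a.
Proof.
  intros e1 e2 [[a1 [a2 a3]] i]. split; [split; [|split]|]; simpl; auto.
  - intros X Y. rewrite e1. apply a2.
  - rewrite e2. apply a3.
Qed.
Lemma mon_iso_extR (C : MonCatData) (D : MonCat) (F G : MFData C D) a ft fh :
  (forall X Y, ft X Y = ftil G X Y) -> fh = fhat G -> is_mon_iso F G a ->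
  is_mon_iso F (@Build_MFData C D (fobj G) (@fhom _ _ G) ft fh) a.
Proof.
  intros e1 e2 [[a1 [a2 a3]] i]. split; [split; [|split]|]; simpl; auto.
  - intros X Y. rewrite e1. apply a2.
  - rewrite e2. apply a3.
Qed.

Section FactorSetFacts.
Variables (Γ : Group) (C : MonCat) (fs : FactorSet Γ C).
Local Notation F := (fsF fs).

Lemma θ_unitl s (A : C) : fsθ fs gone s A ≅ idm (fobj (F s) A).
Proof. eexists; eexists. apply (fs_unitl (fs_ax fs)). Qed.
Lemma θ_unitr s (A : C) : fsθ fs s gone A ≅ idm (fobj (F s) A).
Proof. eexists; eexists. apply (fs_unitr (fs_ax fs)). Qed.
Lemma θi_unitl s (A : C) : fsθi fs gone s A ≅ idm (fobj (F s) A).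
Proof. apply (heq_inv (θ_unitl s A)); [apply (fs_inv (fs_ax fs)) | apply id_comp]. Qed.
Lemma θi_unitr s (A : C) : fsθi fs s gone A ≅ idm (fobj (F s) A).
Proof. apply (heq_inv (θ_unitr s A)); [apply (fs_inv (fs_ax fs)) | apply id_comp]. Qed.
Lemma θ_cocycle s t g (A : C) :
  fsθ fs s (gmul t g) A ∘ fhom (F s) (fsθ fs t g A)
  ≅ fsθ fs (gmul s t) g A ∘ fsθ fs s t (fobj (F g) A).
Proof. apply heq_sym. rewrite (fs_cocycle (fs_ax fs)). apply heq_cast. Qed.
Lemma θ_nat s t (A B : C) (f : hom A B) :
  fhom (F (gmul s t)) f ∘ fsθ fs s t A = fsθ fs s t B ∘ fhom (F s) (fhom (F t) f).
Proof. apply (proj1 (proj1 (fs_iso (fs_ax fs) s t))). Qed.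

Lemma F_one : mfd (F gone) = mf_id C.
Proof. apply (fs_one (fs_ax fs)). Qed.
Lemma fhom_one (A B : C) (f : hom A B) : fhom (F gone) f ≅ f.
Proof. apply (fhom_id_heq F_one). Qed.

Lemma Delta_hom_eq (A B : C) (r s : Γ) (x : hom (fobj (F r) A) B) (y : hom (fobj (F s) A) B) :
  r = s -> x ≅ y ->
  existT (fun t => hom (fobj (F t) A) B) r x = existT (fun t => hom (fobj (F t) A) B) s y.
Proof. intros e h. exact (@existT_heq _ _ (fun t => fobj (F t) A) _ _ _ _ _ e h). Qed.

Definition Delta_j (A B : C) (u : hom A B) : @hom (Delta fs) A B :=
  existT (fun t => hom (fobj (F t) A) B) gone
    (hom_cast (eq_sym (fobj_eq (fs_one (fs_ax fs)) A)) eq_refl u).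

Lemma Delta_j_comp_l (A B D : C) s (u : hom (fobj (F s) A) B) (v : hom B D) :
  Delta_j v ∘ existT (fun t => hom (fobj (F t) A) B) s u
  = existT (fun t => hom (fobj (F t) A) D) s (v ∘ u).
Proof.
  simpl. apply Delta_hom_eq; [apply gmul1l|].
  eapply heq_trans; [| apply eq_heq, (comp_id (v ∘ u))].
  apply heq_comp; [apply θi_unitl|]. apply heq_comp; [apply fhom_one | apply heq_cast].
Qed.

Lemma Delta_j_comp_r (A B D : C) s (u : hom A B) (v : hom (fobj (F s) B) D) :
  (existT (fun t => hom (fobj (F t) B) D) s v : @hom (Delta fs) B D) ∘ Delta_j u
  = existT (fun t => hom (fobj (F t) A) D) s (v ∘ fhom (F s) u).
Proof.
  simpl. apply Delta_hom_eq; [apply gmul1r|].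
  eapply heq_trans; [| apply eq_heq, (comp_id (v ∘ fhom (F s) u))].
  apply heq_comp; [apply θi_unitr|]. apply heq_comp; [apply heq_fhom, heq_cast | apply heq_refl].
Qed.

Lemma Delta_j_comp (A B D : C) (u : hom A B) (v : hom B D) :
  Delta_j v ∘ Delta_j u = Delta_j (v ∘ u).
Proof.
  unfold Delta_j at 2. rewrite Delta_j_comp_l. apply Delta_hom_eq; [reflexivity|].
  eapply heq_trans; [apply heq_comp; [apply heq_cast | apply heq_refl] | apply heq_sym, heq_cast].
Qed.

Lemma is_iso_Delta_j (A B : C) (u : hom A B) : is_iso u -> is_iso (Delta_j u).
Proof.
  intros [w [h1 h2]]. exists (Delta_j w).
  rewrite !Delta_j_comp, h1, h2. split; reflexivity.
Qed.

End FactorSetFacts.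

Section Transfer.
Variable Γ : Group.
Variables C C' : MonCat.
Variables (G : MonFunctor C C') (H : MonFunctor C' C).
Variable α : forall X : C', hom (fobj G (fobj H X)) X.
Variable β : forall X : C, hom (fobj H (fobj G X)) X.
Hypothesis hα : is_mon_iso (mf_comp G H) (mf_id C') α.
Hypothesis hβ : is_mon_iso (mf_comp H G) (mf_id C) β.
Variable fs : FactorSet Γ C.

Local Notation F := (fsF fs).
Local Notation hG := (mf_ax G).
Local Notation hH := (mf_ax H).

Definition αi (X : C') : hom X (fobj G (fobj H X)) :=
  @iinv _ _ _ (α X) (proj2 hα X).
Definition βi (X : C) : hom X (fobj H (fobj G X)) :=
  @iinv _ _ _ (β X) (proj2 hβ X).
Definition α' (X : C') : hom (fobj G (fobj H X)) X :=
  α X ∘ (fhom G (β (fobj H X)) ∘ αi (fobj G (fobj H X))).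

Lemma α_nat (X Y : C') (f : hom X Y) :
  f ∘ α X = α Y ∘ fhom G (fhom H f).
Proof. apply (proj1 (proj1 hα)). Qed.
Lemma β_nat (X Y : C) (f : hom X Y) :
  f ∘ β X = β Y ∘ fhom H (fhom G f).
Proof. apply (proj1 (proj1 hβ)). Qed.
Lemma α_iso (X : C') : is_iso (α X). Proof. apply (proj2 hα). Qed.
Lemma β_iso (X : C) : is_iso (β X). Proof. apply (proj2 hβ). Qed.
Lemma ααi (X : C') : α X ∘ αi X = idm X. Proof. apply iinv_r. Qed.
Lemma ββi (X : C) : β X ∘ βi X = idm X. Proof. apply iinv_r. Qed.

Lemma β_HG (Y : C) :
  β (fobj H (fobj G Y)) = fhom H (fhom G (β Y)).
Proof. apply (iso_cancel_l (β_iso Y)). rewrite β_nat. reflexivity. Qed.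
Lemma α_GH (X : C') :
  α (fobj G (fobj H X)) = fhom G (fhom H (α X)).
Proof. apply (iso_cancel_l (α_iso X)). rewrite α_nat. reflexivity. Qed.

Lemma α'_G (Y : C) : α' (fobj G Y) = fhom G (β Y).
Proof.
  unfold α'. rewrite β_HG, compA, <- α_nat, <- compA, ααi, comp_id. reflexivity.
Qed.
Lemma H_α' (X : C') : fhom H (α' X) = β (fobj H X).
Proof.
  unfold α'. rewrite !(fhom_comp hH), <- β_HG, compA, β_nat, <- compA.
  rewrite <- (fhom_comp hH), <- α_GH, ααi, (fhom_id hH), comp_id. reflexivity.
Qed.

Lemma α'_mon : is_mon_iso (mf_comp G H) (mf_id C') α'.
Proof.
  assert (a1 : is_mon_iso (mf_comp G H) (mf_comp (mf_comp G H) (mf_comp G H))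
                 (fun X => αi (fobj G (fobj H X)))).
  { pose proof (mon_iso_inv (proj2 hα) (proj1 hα)) as h0.
    pose proof (mon_iso_whiskR (mf_comp G H) h0) as h1.
    refine (mon_iso_extL (F := mf_comp (mf_id _) (mf_comp G H)) _ _ h1).
    - intros X Y. simpl. symmetry. apply id_comp.
    - simpl. symmetry. apply id_comp. }
  assert (a2 : is_mon_iso (mf_comp (mf_comp G H) (mf_comp G H)) (mf_comp G H)
                 (fun X => fhom G (β (fobj H X)))).
  { pose proof (mon_iso_whiskR H hβ) as h0.
    pose proof (mon_iso_whiskL hG h0) as h1.
    refine (mon_iso_extR (G := mf_comp G (mf_comp (mf_id _) H)) _ _
             (mon_iso_extL (F := mf_comp G (mf_comp (mf_comp H G) H)) _ _ h1)).
    all: simpl; intros;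
      repeat (rewrite id_comp || rewrite (fhom_comp hG) || rewrite (fhom_comp hH) || rewrite compA);
      reflexivity. }
  exact (mon_iso_vcomp (mon_iso_vcomp a1 a2) hα).
Qed.

Definition GFH (s : Γ) : MFData C' C' :=
  mf_comp G (mf_comp (F s) H).
Lemma F_monoidal s : is_monoidal_functor (F s). Proof. apply mf_ax. Qed.
Lemma GFH_monoidal s : is_monoidal_functor (GFH s).
Proof. apply mf_comp_monoidal; [apply hG | apply mf_comp_monoidal;
  [apply F_monoidal | apply hH]]. Qed.

(* The axioms demand [F'^1 = id] on the nose, while [G F^1 H = G H]: grade 1 is treated
   separately, and there [η] is [α'^-1]. *)
Definition unit_dec (s : Γ) : {s = gone} + {s <> gone} :=
  excluded_middle_informative (s = gone).

Definition F'_data (s : Γ) : MFData C' C' :=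
  match unit_dec s with left _ => mf_id C' | right _ => GFH s end.
Lemma F'_data_monoidal s : is_monoidal_functor (F'_data s).
Proof. unfold F'_data. destruct (unit_dec s). apply mf_id_monoidal. apply GFH_monoidal. Qed.
Definition F' (s : Γ) : MonFunctor C' C' :=
  Build_MonFunctor (F'_data_monoidal s).

Definition αi' (X : C') : hom X (fobj G (fobj H X)) :=
  iinv (proj2 α'_mon X).
Lemma αi'_mon : is_mon_iso (mf_id C') (mf_comp G H) αi'.
Proof. apply (mon_iso_inv (proj2 α'_mon) (proj1 α'_mon)). Qed.

Definition GFH_one_obj (s : Γ) (e : s = gone) (X : C') :
  fobj (GFH s) X = fobj G (fobj H X) :=
  eq_trans (f_equal (fun r => fobj G (fobj (F r) (fobj H X))) e)
    (f_equal (fobj G) (fobj_eq (fs_one (fs_ax fs)) (fobj H X))).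

Definition η_unit (s : Γ) (e : s = gone) (X : C') : hom X (fobj (GFH s) X) :=
  hom_cast eq_refl (eq_sym (GFH_one_obj e X)) (αi' X).

Definition η (s : Γ) : forall X : C', hom (fobj (F'_data s) X) (fobj (GFH s) X) :=
  match unit_dec s as d return forall X : C',
     hom (fobj (match d with left _ => mf_id C' | right _ => GFH s end) X) (fobj (GFH s) X)
  with
  | left e => fun X => η_unit e X
  | right _ => fun X => idm _
  end.

Lemma η_unit_mon (K : MFData C C) (eK : K = mf_id _)
  (p : forall X, fobj G (fobj K (fobj H X)) = fobj G (fobj H X)) :
  is_mon_iso (mf_id C') (mf_comp G (mf_comp K H))
    (fun X => hom_cast eq_refl (eq_sym (p X)) (αi' X)).
Proof.
  subst K.
  assert (E : (fun X => hom_cast eq_refl (eq_sym (p X)) (αi' X)) = αi').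
  { apply functional_extensionality_dep. intros X. apply hom_cast_refl. }
  rewrite E.
  refine (mon_iso_extR (G := mf_comp G H) _ _ αi'_mon); simpl; intros;
    rewrite ?id_comp; reflexivity.
Qed.

Lemma η_mon (s : Γ) : is_mon_iso (F' s) (GFH s) (η s).
Proof.
  unfold F', η. simpl. unfold F'_data. destruct (unit_dec s) as [e|n].
  - subst s. unfold η_unit. apply η_unit_mon. apply (fs_one (fs_ax fs)).
  - apply mon_iso_id.
Qed.

Definition ηi (s : Γ) (X : C') : hom (fobj (GFH s) X) (fobj (F' s) X) :=
  iinv (proj2 (η_mon s) X).
Lemma ηi_mon (s : Γ) : is_mon_iso (GFH s) (F' s) (ηi s).
Proof. apply (mon_iso_inv (proj2 (η_mon s)) (proj1 (η_mon s))). Qed.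

Definition θ' (s t : Γ) (X : C') :
  hom (fobj (F' s) (fobj (F' t) X)) (fobj (F' (gmul s t)) X) :=
  ηi (gmul s t) X
  ∘ (fhom G (fsθ fs s t (fobj H X))
  ∘ (fhom G (fhom (F s) (β (fobj (F t) (fobj H X))))
  ∘ (fhom G (fhom (F s) (fhom H (η t X)))
  ∘ η s (fobj (F' t) X)))).

Lemma θ'_mon (s t : Γ) :
  is_mon_iso (mf_comp (F' s) (F' t)) (F' (gmul s t)) (θ' s t).
Proof.
  pose proof (F_monoidal s) as hs. pose proof (F_monoidal t) as ht.
  pose proof (mon_iso_whiskR (F' t) (η_mon s)) as p1.
  pose proof (mon_iso_whiskL (GFH_monoidal s) (η_mon t)) as p2.
  assert (p3 : is_mon_iso (mf_comp (GFH s) (GFH t))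
                 (mf_comp G (mf_comp (mf_comp (F s) (F t)) H))
                 (fun X => fhom G (fhom (F s) (β (fobj (F t) (fobj H X)))))).
  { pose proof (mon_iso_whiskL hG (mon_iso_whiskL hs
                  (mon_iso_whiskR (mf_comp (F t) H) hβ))) as h1.
    refine (mon_iso_extR
              (G := mf_comp G (mf_comp (F s) (mf_comp (mf_id _) (mf_comp (F t) H)))) _ _
              (mon_iso_extL
                 (F := mf_comp G (mf_comp (F s) (mf_comp (mf_comp H G) (mf_comp (F t) H))))
                 _ _ h1)).
    all: simpl; intros;
      repeat (rewrite id_comp || rewrite (fhom_comp hG) || rewrite (fhom_comp hH)
              || rewrite (fhom_comp hs) || rewrite (fhom_comp ht) || rewrite compA);
      reflexivity. }
  pose proof (mon_iso_whiskL hG (mon_iso_whiskR H (fs_iso (fs_ax fs) s t))) as p4.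
  pose proof (ηi_mon (gmul s t)) as p5.
  exact (mon_iso_vcomp (mon_iso_vcomp (mon_iso_vcomp (mon_iso_vcomp p1 p2) p3) p4) p5).
Qed.

Definition θ'i (s t : Γ) (X : C') :
  hom (fobj (F' (gmul s t)) X) (fobj (F' s) (fobj (F' t) X)) :=
  iinv (proj2 (θ'_mon s t) X).

Lemma F'_one : mfd (F' gone) = mf_id C'.
Proof. unfold F'; simpl; unfold F'_data. destruct (unit_dec gone); [reflexivity | congruence]. Qed.

Lemma η_one (X : C') : η gone X ≅ αi' X.
Proof.
  unfold η, F'_data. destruct (unit_dec gone) as [e|n]; [unfold η_unit;
    apply heq_cast | congruence].
Qed.

Lemma ηηi s X : η s X ∘ ηi s X = idm _. Proof. apply iinv_r. Qed.
Lemma ηiη s X : ηi s X ∘ η s X = idm _. Proof. apply iinv_l. Qed.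
Lemma α'αi' X : α' X ∘ αi' X = idm _. Proof. apply iinv_r. Qed.
Lemma αi'α' X : αi' X ∘ α' X = idm _. Proof. apply iinv_l. Qed.

Lemma ηi_one (X : C') : ηi gone X ≅ α' X.
Proof.
  apply (heq_inv (η_one X)); [apply ηiη | apply αi'α'].
Qed.

Lemma αi'_nat (A B : C') (f : hom A B) :
  fhom G (fhom H f) ∘ αi' A = αi' B ∘ f.
Proof. apply (proj1 (proj1 αi'_mon)). Qed.
Lemma η_nat s (A B : C') (f : hom A B) :
  fhom G (fhom (F s) (fhom H f)) ∘ η s A = η s B ∘ fhom (F' s) f.
Proof. apply (proj1 (proj1 (η_mon s))). Qed.
Lemma θ'_unitl s (X : C') : θ' gone s X ≅ idm (fobj (F' s) X).
Proof.
  eapply heq_trans with (g := ηi s X ∘ (fhom G (idm _)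
      ∘ (fhom G (β (fobj (F s) (fobj H X)))
      ∘ (fhom G (fhom H (η s X)) ∘ αi' (fobj (F' s) X))))).
  - unfold θ'. apply heq_comp; [apply heq_comp; [apply heq_comp; [apply heq_comp|]|]|].
    + apply η_one.
    + apply heq_fhom. apply fhom_one.
    + apply heq_fhom. apply fhom_one.
    + apply heq_fhom. apply θ_unitl.
    + apply (heq_fam (fun r => ηi r X)). apply gmul1l.
  - apply eq_heq. rewrite (fhom_id hG), id_comp, αi'_nat, <- α'_G, !compA.
    rewrite <- (compA (αi' _)), α'αi', comp_id. apply ηiη.
Qed.

Lemma θ'_unitr s (X : C') : θ' s gone X ≅ idm (fobj (F' s) X).
Proof.
  pose proof (F_monoidal s) as hs.
  eapply heq_trans with (g := ηi s X ∘ (fhom G (idm _)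
      ∘ (fhom G (fhom (F s) (β (fobj H X)))
      ∘ (fhom G (fhom (F s) (fhom H (αi' X))) ∘ η s X)))).
  - unfold θ'. apply heq_comp; [apply heq_comp; [apply heq_comp; [apply heq_comp|]|]|].
    + apply (heq_fam (η s)). apply (fobj_eq F'_one X).
    + do 3 apply heq_fhom. apply η_one.
    + do 2 apply heq_fhom. apply (heq_fam β). apply (fobj_eq (F_one fs) (fobj H X)).
    + apply heq_fhom. apply θ_unitr.
    + apply (heq_fam (fun r => ηi r X)). apply gmul1r.
  - apply eq_heq. rewrite (fhom_id hG), id_comp, <- H_α', (compA (η s X)). simpl.
    rewrite <- (fhom_comp hG), <- (fhom_comp hs), <- (fhom_comp hH), α'αi'.
    rewrite (fhom_id hH), (fhom_id hs), (fhom_id hG), id_comp. apply ηiη.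
Qed.

Lemma βnat_l s (A B : C) (f : hom A B) (W : C')
  (x : hom (fobj G (fobj (F s) B)) W) :
  x ∘ fhom G (fhom (F s) (β B))
    ∘ fhom G (fhom (F s) (fhom H (fhom G f)))
  = x ∘ fhom G (fhom (F s) f) ∘ fhom G (fhom (F s) (β A)).
Proof.
  pose proof (F_monoidal s) as hs.
  rewrite <- !compA, <- !(fhom_comp hG), <- !(fhom_comp hs), β_nat. reflexivity.
Qed.
Lemma θnat_l s t (A B : C) (f : hom A B) (W : C')
  (x : hom (fobj G (fobj (F (gmul s t)) B)) W) :
  x ∘ fhom G (fhom (F (gmul s t)) f) ∘ fhom G (fsθ fs s t A)
  = x ∘ fhom G (fsθ fs s t B) ∘ fhom G (fhom (F s) (fhom (F t) f)).
Proof.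
  rewrite <- !compA, <- !(fhom_comp hG), θ_nat. reflexivity.
Qed.
Lemma ηηi_l s (X : C') (W : C') (x : hom (fobj (GFH s) X) W) :
  x ∘ η s X ∘ ηi s X = x.
Proof. rewrite <- compA, ηηi, comp_id. reflexivity. Qed.
Lemma ηηiH_l s r (X : C') (W : C')
  (x : hom (fobj G (fobj (F s) (fobj H (fobj (GFH r) X)))) W) :
  x ∘ fhom G (fhom (F s) (fhom H (η r X)))
    ∘ fhom G (fhom (F s) (fhom H (ηi r X))) = x.
Proof.
  pose proof (F_monoidal s) as hs.
  rewrite <- !compA, <- !(fhom_comp hG), <- !(fhom_comp hs), <- !(fhom_comp hH), ηηi.
  rewrite (fhom_id hH), (fhom_id hs), (fhom_id hG), comp_id. reflexivity.
Qed.

Lemma θ'_cocycle s t g (X : C') :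
  θ' s (gmul t g) X ∘ fhom (F' s) (θ' t g X)
  ≅ θ' (gmul s t) g X ∘ θ' s t (fobj (F' g) X).
Proof.
  (* Both sides reduce to [G] applied to the two sides of the cocycle identity of [θ],
     followed by the same tail [b1 ∘ ... ∘ b5]. *)
  pose proof (F_monoidal s) as hs. pose proof (F_monoidal t) as ht.
  set (Y := fobj H X).
  set (b1 := fhom G (fhom (F s) (fhom (F t) (β (fobj (F g) Y))))).
  set (b2 := fhom G (fhom (F s) (fhom (F t) (fhom H (η g X))))).
  set (b3 := fhom G (fhom (F s) (β (fobj (F t) (fobj H (fobj (F' g) X)))))).
  set (b4 := fhom G (fhom (F s) (fhom H (η t (fobj (F' g) X))))).
  set (b5 := η s (fobj (F' t) (fobj (F' g) X))).
  assert (EL : θ' s (gmul t g) X ∘ fhom (F' s) (θ' t g X)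
    = ηi (gmul s (gmul t g)) X
      ∘ fhom G (fsθ fs s (gmul t g) Y ∘ fhom (F s) (fsθ fs t g Y))
      ∘ b1 ∘ b2 ∘ b3 ∘ b4 ∘ b5).
  { unfold θ', b1, b2, b3, b4, b5, Y. rewrite !compA, (postcomp_eq (eq_sym (η_nat s _))).
    repeat (rewrite (fhom_comp hH) || rewrite (fhom_comp hs) || rewrite (fhom_comp hG)
      || rewrite compA).
    rewrite (ηηiH_l (s := s) (r := gmul t g) (X := X)).
    rewrite !(βnat_l (s := s)). repeat (rewrite (fhom_comp hG) || rewrite compA). reflexivity. }
  assert (ER : θ' (gmul s t) g X ∘ θ' s t (fobj (F' g) X)
    = ηi (gmul (gmul s t) g) X
      ∘ fhom G (fsθ fs (gmul s t) g Y ∘ fsθ fs s t (fobj (F g) Y))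
      ∘ b1 ∘ b2 ∘ b3 ∘ b4 ∘ b5).
  { unfold θ', b1, b2, b3, b4, b5, Y. rewrite !compA.
    rewrite (ηηi_l (s := gmul s t) (X := fobj (F' g) X)).
    rewrite !(θnat_l (s := s) (t := t)). repeat (rewrite (fhom_comp hG) || rewrite compA).
    reflexivity. }
  rewrite EL, ER.
  do 5 (apply heq_comp; [apply heq_refl|]).
  apply heq_comp.
  - exact (@heq_fhom _ _ G _ _ _ _ _ _ (θ_cocycle fs s t g Y)).
  - apply (heq_fam (fun r => ηi r X)). apply gmulA.
Qed.

Lemma θ'_iso s t X : is_iso (θ' s t X). Proof. apply (proj2 (θ'_mon s t)). Qed.

Lemma F'_autoeq (s : Γ) : is_monoidal_equivalence (F' s).
Proof.
  split; [apply mf_ax|]. exists (F' (ginv s)). split; [apply mf_ax|].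
  rewrite <- F'_one. split.
  - rewrite <- (gmulVr s). exists (θ' s (ginv s)). apply θ'_mon.
  - rewrite <- (gmulVl s). exists (θ' (ginv s) s). apply θ'_mon.
Qed.

Lemma fs'_ax : is_factor_set F' θ' θ'i.
Proof.
  refine (@Build_is_factor_set _ _ F' θ' θ'i F'_autoeq θ'_mon _ F'_one _ _ _).
  - intros s t X. split; [apply iinv_l | apply iinv_r].
  - intros s X. apply cast_heq. apply θ'_unitl.
  - intros s X. apply cast_heq. apply θ'_unitr.
  - intros s t g X. symmetry. apply cast_heq. apply θ'_cocycle.
Qed.

Definition fs' : FactorSet Γ C' := Build_FactorSet fs'_ax.

Definition Φ : FunctorData (Delta fs) (Delta fs') :=
  @Build_FunctorData (Delta fs) (Delta fs') (fun A : Delta fs => fobj G A)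
    (fun (A B : Delta fs) (f : hom A B) =>
       existT (fun t => hom (fobj (F' t) (fobj G A)) (fobj G B)) (projT1 f)
         (fhom G (projT2 f) ∘ (fhom G (fhom (F (projT1 f)) (β A))
            ∘ η (projT1 f) (fobj G A)))).

Definition Ψ : FunctorData (Delta fs') (Delta fs) :=
  @Build_FunctorData (Delta fs') (Delta fs) (fun A : Delta fs' => fobj H A)
    (fun (A B : Delta fs') (f : hom A B) =>
       existT (fun t => hom (fobj (F t) (fobj H A)) (fobj H B)) (projT1 f)
         (fhom H (projT2 f) ∘ (fhom H (ηi (projT1 f) A)
            ∘ βi (fobj (F (projT1 f)) (fobj H A))))).

Lemma θiθ_l s t (A : C) (W : C')
  (x : hom (fobj G (fobj (F s) (fobj (F t) A))) W) :
  x ∘ fhom G (fsθi fs s t A) ∘ fhom G (fsθ fs s t A) = x.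
Proof.
  rewrite <- compA, <- (fhom_comp hG), (proj1 (fs_inv (fs_ax fs) s t A)), (fhom_id hG), comp_id.
  reflexivity.
Qed.

Lemma Φ_id (A : Delta fs) : Fm Φ (idm A) = idm (Fo Φ A).
Proof.
  simpl. apply (@Delta_hom_eq _ _ fs'); [reflexivity|].
  eapply heq_trans with (g := fhom G (idm (A : C)) ∘ (fhom G (β A) ∘ αi' (fobj G A))).
  - apply heq_comp; [apply heq_comp|].
    + apply η_one.
    + apply heq_fhom. apply fhom_one.
    + apply heq_fhom. apply heq_cast.
  - eapply heq_trans; [| apply heq_sym, heq_cast].
    apply eq_heq. rewrite (fhom_id hG), id_comp, <- α'_G, α'αi'. reflexivity.
Qed.

Lemma Φ_comp (A B E : Delta fs) (f : hom A B) (g : hom B E) :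
  Fm Φ (g ∘ f) = Fm Φ g ∘ Fm Φ f.
Proof.
  destruct f as [s u], g as [t v]. simpl. apply (@Delta_hom_eq _ _ fs'); [reflexivity|].
  apply eq_heq.
  pose proof (F_monoidal t) as ht. pose proof (F_monoidal s) as hs.
  apply (iso_cancel_r (θ'_iso t s (fobj G A))).
  rewrite <- (compA (θ' t s _) (θ'i t s _)). unfold θ'i. rewrite iinv_l, comp_id.
  unfold θ'. rewrite !compA, (postcomp_eq (eq_sym (η_nat t _))).
  repeat (rewrite (fhom_comp hG) || rewrite (fhom_comp ht) || rewrite (fhom_comp hH)
    || rewrite compA).
  rewrite (ηηi_l (s := gmul t s)).
  rewrite (θnat_l (s := t) (t := s)), θiθ_l.
  rewrite !(βnat_l (s := t)). reflexivity.
Qed.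

Lemma βinat_l (A B W : C) (f : hom A B) (x : hom (fobj H (fobj G B)) W) :
  x ∘ βi B ∘ f = x ∘ fhom H (fhom G f) ∘ βi A.
Proof.
  rewrite <- !compA. f_equal.
  apply (iso_cancel_l (β_iso B)). rewrite !compA, ββi, id_comp, <- β_nat, <- compA, ββi, comp_id.
  reflexivity.
Qed.
Lemma ββiFt_l t (Y : C) (W : C')
  (x : hom (fobj G (fobj (F t) Y)) W) :
  x ∘ fhom G (fhom (F t) (β Y)) ∘ fhom G (fhom (F t) (βi Y)) = x.
Proof.
  pose proof (F_monoidal t) as ht.
  rewrite <- compA, <- (fhom_comp hG), <- (fhom_comp ht), ββi, (fhom_id ht), (fhom_id hG),
    comp_id. reflexivity.
Qed.

Lemma Ψ_id (A : Delta fs') : Fm Ψ (idm A) = idm (Fo Ψ A).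
Proof.
  simpl. apply (@Delta_hom_eq _ _ fs); [reflexivity|].
  eapply heq_trans with (g := fhom H (idm (A : C')) ∘ (fhom H (α' A) ∘ βi (fobj H A))).
  - apply heq_comp; [apply heq_comp|].
    + apply (heq_fam βi). apply (fobj_eq (F_one fs)).
    + apply heq_fhom. apply ηi_one.
    + apply heq_fhom. apply heq_cast.
  - eapply heq_trans; [| apply heq_sym, heq_cast].
    apply eq_heq. rewrite (fhom_id hH), id_comp, H_α', ββi. reflexivity.
Qed.

Lemma Ψ_comp (A B E : Delta fs') (f : hom A B) (g : hom B E) :
  Fm Ψ (g ∘ f) = Fm Ψ g ∘ Fm Ψ f.
Proof.
  destruct f as [s u], g as [t v]. simpl. apply (@Delta_hom_eq _ _ fs); [reflexivity|].
  apply eq_heq.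
  pose proof (F_monoidal t) as ht. pose proof (F_monoidal s) as hs.
  assert (K : θ'i t s A ∘ ηi (gmul t s) A ∘ fhom G (fsθ fs t s (fobj H A))
            = ηi t (fobj (F' s) A) ∘ fhom G (fhom (F t) (fhom H (ηi s A)))
              ∘ fhom G (fhom (F t) (βi (fobj (F s) (fobj H A))))).
  { apply (iso_cancel_l (θ'_iso t s A)). rewrite !compA. unfold θ'i. rewrite iinv_r, id_comp.
    unfold θ'. rewrite !compA, (ηηi_l (s := t)), (ηηiH_l (s := t) (r := s) (X := A)), ββiFt_l.
    reflexivity. }
  assert (hθ : is_iso (fsθ fs t s (fobj H A))) by apply (proj2 (fs_iso (fs_ax fs) t s)).
  apply (iso_cancel_r hθ).
  rewrite (postcomp_eq (proj1 (fs_inv (fs_ax fs) t s _))), comp_id.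
  repeat (rewrite (fhom_comp hH) || rewrite (fhom_comp ht) || rewrite compA).
  repeat rewrite βinat_l.
  apply comp_congr_l.
  rewrite <- !compA, <- !(fhom_comp hH), !compA.
  f_equal.
  transitivity (v ∘ fhom (F' t) u ∘ (θ'i t s A ∘ ηi (gmul t s) A
                  ∘ fhom G (fsθ fs t s (fobj H A)))).
  { rewrite !compA. reflexivity. }
  rewrite K.
  transitivity (v ∘ (fhom (F' t) u ∘ ηi t (fobj (F' s) A))
     ∘ fhom G (fhom (F t) (fhom H (ηi s A)))
     ∘ fhom G (fhom (F t) (βi (fobj (F s) (fobj H A))))).
  { rewrite !compA. reflexivity. }
  rewrite (proj1 (proj1 (ηi_mon t))). rewrite !compA. reflexivity.
Qed.

Definition ε (X : Delta fs) : hom (Fo (fd_comp Ψ Φ) X) (Fo (fd_id _) X) :=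
  Delta_j fs (β X).

Lemma ε_nat (X Y : Delta fs) (f : hom X Y) :
  Fm (fd_id _) f ∘ ε X = ε Y ∘ Fm (fd_comp Ψ Φ) f.
Proof.
  destruct f as [s u].
  etransitivity; [apply Delta_j_comp_r|].
  etransitivity; [|symmetry; apply Delta_j_comp_l].
  apply (@Delta_hom_eq _ _ fs); [reflexivity|]. apply eq_heq.
  pose proof (F_monoidal s) as hs.
  simpl. rewrite !(fhom_comp hH), !compA.
  transitivity (β Y ∘ fhom H (fhom G u)
    ∘ fhom H (fhom G (fhom (F s) (β X)))
    ∘ (fhom H (η s (fobj G X)) ∘ fhom H (ηi s (fobj G X)))
    ∘ βi (fobj (F s) (fobj H (fobj G X)))).
  2:{ rewrite !compA. reflexivity. }
  rewrite <- (fhom_comp hH), ηηi, (fhom_id hH), comp_id.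
  rewrite <- (β_nat u), (postcomp_eq (eq_sym (β_nat (fhom (F s) (β X))))), <- !compA, ββi,
    comp_id. reflexivity.
Qed.

Lemma ε_iso (X : Delta fs) : is_iso (ε X).
Proof. apply is_iso_Delta_j, β_iso. Qed.

Definition δ (X : Delta fs') : hom (Fo (fd_comp Φ Ψ) X) (Fo (fd_id _) X) :=
  Delta_j fs' (α' X).

Lemma δ_iso (X : Delta fs') : is_iso (δ X).
Proof. apply is_iso_Delta_j, (proj2 α'_mon). Qed.

Lemma F'_conj s (A B : C') (f : hom A B) :
  fhom (F' s) f = ηi s B ∘ (fhom G (fhom (F s) (fhom H f)) ∘ η s A).
Proof. rewrite η_nat, compA, ηiη, id_comp. reflexivity. Qed.

Lemma α'_nat (A B : C') (f : hom A B) :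
  f ∘ α' A = α' B ∘ fhom G (fhom H f).
Proof. apply (proj1 (proj1 α'_mon)). Qed.

Lemma δ_nat (X Y : Delta fs') (f : hom X Y) :
  Fm (fd_id _) f ∘ δ X = δ Y ∘ Fm (fd_comp Φ Ψ) f.
Proof.
  destruct f as [s u].
  etransitivity; [apply Delta_j_comp_r|].
  etransitivity; [|symmetry; apply Delta_j_comp_l].
  apply (@Delta_hom_eq _ _ fs'); [reflexivity|]. apply eq_heq.
  pose proof (F_monoidal s) as hs. cbn [Fm Fo Φ Ψ fd_comp fd_id projT1 projT2].
  transitivity (u ∘ (ηi s X ∘ (fhom G (fhom (F s) (β (fobj H X)))
                   ∘ η s (fobj G (fobj H X))))).
  { apply comp_congr_r. rewrite <- H_α'. apply F'_conj. }
  transitivity (u ∘ ηi s X ∘ (α' (fobj G (fobj (F s) (fobj H X)))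
     ∘ fhom G (βi (fobj (F s) (fobj H X))))
     ∘ (fhom G (fhom (F s) (β (fobj H X))) ∘ η s (fobj G (fobj H X)))).
  { rewrite α'_G, <- (fhom_comp hG), ββi, (fhom_id hG), comp_id, !compA. reflexivity. }
  rewrite !(fhom_comp hG), !compA.
  rewrite <- (α'_nat u).
  do 3 apply comp_congr_l. rewrite <- !compA. apply comp_congr_r. apply (α'_nat (ηi s X)).
Qed.

Lemma Φ_Gamma_equivalence : is_Gamma_equivalence Φ.
Proof.
  split.
  - intros A B f. reflexivity.
  - split.
    + split; [apply Φ_id | apply Φ_comp].
    + exists Ψ. split; [split; [apply Ψ_id | apply Ψ_comp]|]. split.
      * exists ε. split; [intros; apply ε_nat | apply ε_iso].
      * exists δ. split; [intros; apply δ_nat | apply δ_iso].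
Qed.

End Transfer.

Theorem proposition2p1 (Γ : Group) (C C' : MonCat)
  (G : MonFunctor C C') (H : MonFunctor C' C)
  (α : forall X : C', hom (fobj G (fobj H X)) X)
  (β : forall X : C, hom (fobj H (fobj G X)) X)
  (hα : is_mon_iso (mf_comp G H) (mf_id C') α)
  (hβ : is_mon_iso (mf_comp H G) (mf_id C) β)
  (fs : FactorSet Γ C) :
  exists fs' : FactorSet Γ C',
    (forall s : Γ, exists η,
        is_mon_iso (fsF fs' s) (mf_comp G (mf_comp (fsF fs s) H)) η) /\
    exists Φ : FunctorData (Delta fs) (Delta fs'),
      (forall A : C, Fo Φ A = fobj G A) /\ is_Gamma_equivalence Φ.
Proof.
  exists (fs' hα hβ fs). split.
  - intros s. exists (η hα hβ fs s). apply η_mon.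
  - exists (Φ hα hβ fs). split; [reflexivity | apply Φ_Gamma_equivalence].
Qed.
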